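(* Let $r>0$ be a fixed integer. There exist a constant $c>0$ and infinitely many $n$ such that, for each such $n$, there is a hypergraph $H$ on $n$ vertices which is both $r$-cross-free and $r$-closed, and such that every sub-hypergraph $H'\subseteq H$ with $\mathrm{cl}_r(H')=H$ has at least $c\, n^r$ hyperedges (i.e. $\Omega(n^r)$ hyperedges).
   Context: Hypergraphs have vertex set $V=[n]$ and are identified with their sets of hyperedges; a sub-hypergraph is a subset of the hyperedge set; $\overline A = V\setminus A$. $\mathcal K_r(n)$ is the class of hypergraphs $\mathcal E$ on $V$ satisfying: (R0) every $X\subseteq V$ with $|X|\le r$ is in $\mathcal E$; (R1) $A\in\mathcal E\Rightarrow V\setminus A\in\mathcal E$; (R2) $A,B\in\mathcal E$ and $|A\cap B|\ge r\Rightarrow A\cup B\in\mathcal E$. $\mathcal K^0_r(n)$ is the class satisfying (R0) and (R1) only. $\mathrm{cl}_r(H)$ (resp. $\mathrm{cl}^0_r(H)$) is the intersection of all hypergraphs in $\mathcal K_r(n)$ (resp. $\mathcal K^0_r(n)$) containing $H$. $H$ is $r$-closed if $\mathrm{cl}_r(H)=H$. Sets $A,B\subseteq V$ are $r$-orthogonal if $\mathrm{cl}_r(\{A,B\})=\mathrm{cl}^0_r(\{A,B\})$. A hypergraph is $r$-cross-free if every pair of its hyperedges is $r$-orthogonal. *)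

From mathcomp Require Import all_boot all_order all_algebra.
Set Implicit Arguments. Unset Strict Implicit. Unset Printing Implicit Defensive.

Section Hyper.
Variable n : nat.
Notation hyp := {set {set 'I_n}}.

Definition R0 (r : nat) (E : hyp) : bool :=
  [forall X : {set 'I_n}, (#|X| <= r) ==> (X \in E)].
Definition R1 (E : hyp) : bool :=
  [forall A in E, ~: A \in E].
Definition R2 (r : nat) (E : hyp) : bool :=
  [forall A in E, forall B in E, (r <= #|A :&: B|) ==> (A :|: B \in E)].

Definition inK (r : nat) (E : hyp) : bool := [&& R0 r E, R1 E & R2 r E].
Definition inK0 (r : nat) (E : hyp) : bool := R0 r E && R1 E.

Definition cl (r : nat) (H : hyp) : hyp :=
  [set A | [forall E : hyp, (inK r E && (H \subset E)) ==> (A \in E)]].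
Definition cl0 (r : nat) (H : hyp) : hyp :=
  [set A | [forall E : hyp, (inK0 r E && (H \subset E)) ==> (A \in E)]].

Definition r_closed (r : nat) (H : hyp) : Prop := cl r H = H.

Definition r_orthogonal (r : nat) (A B : {set 'I_n}) : Prop :=
  cl r [set A; B] = cl0 r [set A; B].

Definition r_cross_free (r : nat) (H : hyp) : Prop :=
  forall A B, A \in H -> B \in H -> r_orthogonal r A B.
End Hyper.

(* Let S be a family of (r+1)-sets any two of which meet in fewer than r points,
   and let H consist of the sets of size at most r, the members of S, and all
   their complements.  Two members of H meeting in r points either absorb one
   another or have a union with a complement of size at most r, so H is r-closed;
   the closure of two members A, B of H lies in the analogous hypergraph built
   from the members of S among A, B and their complements, which R0 and R1 alone
   already generate, so H is r-cross-free.  Members of S are neither small nor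
   co-small, hence any H' generating H contains each of them or its complement,
   and |H'| >= |S|/2.  The graphs of the words of the parity-check code
   {f : [r+1] -> Z_m | sum f = 0} on the vertex set [r+1] x Z_m form such a
   family S with m^r members on n = (r+1)m vertices. *)
From mathcomp Require Import all_boot all_order all_algebra zify.
Import Order.TTheory GRing.Theory Num.Theory.

Set Implicit Arguments.
Unset Strict Implicit.
Unset Printing Implicit Defensive.

Section Closure.
Variables (n r : nat).
Implicit Types (H E : {set {set 'I_n}}) (X : {set 'I_n}).

Lemma cl_minimal H E : inK r E -> H \subset E -> cl r H \subset E.
Proof.
move=> KE HE; apply/subsetP=> X; rewrite inE => /forallP /(_ E).
by rewrite KE HE => /implyP; apply.
Qed.

Lemma sub_cl H : H \subset cl r H.
Proof.
apply/subsetP=> X XH; rewrite inE; apply/forallP=> E; apply/implyP.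
by case/andP=> _ /subsetP; apply.
Qed.

Lemma cl0_sub_cl H : cl0 r H \subset cl r H.
Proof.
apply/subsetP=> X; rewrite !inE => /forallP clX; apply/forallP=> E.
apply/implyP=> /andP[/and3P[E0 E1 _] HE]; move: (clX E).
by rewrite /inK0 E0 E1 HE.
Qed.

Lemma R1_setC E X : R1 E -> (~: X \in E) = (X \in E).
Proof.
move=> /forall_inP E1; apply/idP/idP; last exact: E1.
by move/E1; rewrite setCK.
Qed.

End Closure.

Section Packing.
Variables (n r : nat).
Implicit Types (S H : {set {set 'I_n}}) (A B P X : {set 'I_n}).

Definition packing S :=
  (forall P, P \in S -> #|P| = r.+1) /\
  (forall P Q, P \in S -> Q \in S -> r <= #|P :&: Q| -> P = Q).

Definition packing_hyp S : {set {set 'I_n}} :=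
  [set X : {set 'I_n} | [|| #|X| <= r, #|~: X| <= r, X \in S | ~: X \in S]].

Definition restr_packing S H := [set P in S | (P \in H) || (~: P \in H)].

Lemma packingS S S' : S' \subset S -> packing S -> packing S'.
Proof.
move=> /subsetP sS [S_card S_inter].
by split=> [P /sS|P Q /sS PS /sS]; [exact: S_card | exact: S_inter].
Qed.

Lemma packing_restr S H : packing S -> packing (restr_packing S H).
Proof. by apply: packingS; apply/subsetP=> P; rewrite inE => /andP[]. Qed.

Lemma packing_hypC S X : (~: X \in packing_hyp S) = (X \in packing_hyp S).
Proof.
rewrite !inE setCK.
by case: (#|X| <= r); case: (#|~: X| <= r); case: (X \in S); case: (~: X \in S).
Qed.

Lemma packing_hyp_cases S X : packing S -> X \in packing_hyp S ->
  [\/ #|X| <= r, #|~: X| <= r.+1 | X \in S].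
Proof.
case=> S_card _; rewrite inE => /or4P[small|cosmall|XS|CXS].
- exact: Or31.
- by apply: Or32; apply: leqW.
- exact: Or33.
- by apply: Or32; rewrite S_card.
Qed.

Lemma subset_card_setI A B : #|B| <= #|A :&: B| -> B \subset A.
Proof. by move=> cardB; apply/setIidPr/eqP; rewrite eqEcard subsetIr. Qed.

(* The complement of [A :|: B] is [~: B] or a proper subset of it, of size at most [r]. *)
Lemma packing_hyp_setU_cosmall S A B :
  B \in packing_hyp S -> #|~: B| <= r.+1 -> A :|: B \in packing_hyp S.
Proof.
move=> BF cardCB; have [eqCB|neqCB] := eqVneq (~: A :&: ~: B) (~: B).
  by rewrite -setCU in eqCB; rewrite (setC_inj eqCB).
have /proper_card ltCB : ~: A :&: ~: B \proper ~: B by rewrite properEneq neqCB subsetIr.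
by rewrite inE setCU -[#|_ :&: _| <= r]ltnS (leq_trans ltCB cardCB) orbT.
Qed.

Lemma packing_hyp_inK S : packing S -> inK r (packing_hyp S).
Proof.
move=> packS; apply/and3P; split.
- by apply/forallP=> X; apply/implyP=> small; rewrite inE small.
- by apply/forall_inP=> X; rewrite packing_hypC.
apply/forall_inP=> A AF; apply/forall_inP=> B BF; apply/implyP=> cardAB.
have absorb X Y : X \in packing_hyp S -> Y \in packing_hyp S -> r <= #|X :&: Y| ->
    #|Y| <= r \/ #|~: Y| <= r.+1 -> X :|: Y \in packing_hyp S.
  move=> XF YF cardXY [small|cosmall]; last exact: packing_hyp_setU_cosmall.
  by have /setUidPl -> : Y \subset X by apply/subset_card_setI/(leq_trans small).
case: (packing_hyp_cases packS BF) => [small|cosmall|BS].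
- by apply: absorb => //; left.
- by apply: absorb => //; right.
case: (packing_hyp_cases packS AF) => [small|cosmall|AS].
- by rewrite setUC; apply: absorb; rewrite 1?setIC //; left.
- by rewrite setUC; apply: absorb; rewrite 1?setIC //; right.
by rewrite (packS.2 _ _ AS BS cardAB) setUid.
Qed.

Lemma packing_hyp_closed S : packing S -> r_closed r (packing_hyp S).
Proof.
move=> packS; apply/eqP; rewrite eqEsubset sub_cl andbT.
exact/cl_minimal/subxx/packing_hyp_inK.
Qed.

Lemma sub_packing_hyp_restr S H :
  H \subset packing_hyp S -> H \subset packing_hyp (restr_packing S H).
Proof.
move=> /subsetP HF; apply/subsetP=> X XH; move: (HF X XH); rewrite !inE.
by case/or4P=> ->; rewrite ?orbT //= XH ?setCK ?XH ?orbT.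
Qed.

Lemma cl_sub_packing_hyp_restr S H : packing S ->
  H \subset packing_hyp S -> cl r H \subset packing_hyp (restr_packing S H).
Proof.
move=> packS HF; apply: cl_minimal; first exact/packing_hyp_inK/packing_restr.
exact: sub_packing_hyp_restr.
Qed.

Lemma packing_hyp_restr_sub_cl0 S H : packing_hyp (restr_packing S H) \subset cl0 r H.
Proof.
apply/subsetP=> X XF; rewrite inE; apply/forallP=> E.
apply/implyP=> /andP[/andP[/forallP E0 E1] /subsetP HE].
have restrE P : P \in restr_packing S H -> P \in E.
  by rewrite inE => /andP[_ /orP[/HE // | /HE]]; rewrite R1_setC.
move: XF; rewrite inE => /or4P[small|cosmall|/restrE //|/restrE].
- exact: (implyP (E0 X)).
- by rewrite -(R1_setC _ E1); apply: (implyP (E0 _)).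
- by rewrite R1_setC.
Qed.

Lemma packing_hyp_cross_free S : packing S -> r_cross_free r (packing_hyp S).
Proof.
move=> packS A B AF BF; apply/eqP; rewrite eqEsubset cl0_sub_cl andbT.
apply: subset_trans (packing_hyp_restr_sub_cl0 S _).
apply: cl_sub_packing_hyp_restr => //.
by apply/subsetP=> X; rewrite in_set2 => /orP[]/eqP->.
Qed.

(* For [n >= 2(r+1)] the members of [S] are neither small nor co-small, so the
   closure of [H] can only produce those already in [H] or complemented in [H]. *)
Lemma card_packing_le_generators S H : packing S -> 2 * r.+1 <= n ->
  H \subset packing_hyp S -> cl r H = packing_hyp S -> #|S| <= 2 * #|H|.
Proof.
move=> packS le2rn HF clH.
have SH : S \subset H :|: [set ~: X | X in H].
  apply/subsetP=> P PS.
  have cardP : #|P| = r.+1 := packS.1 P PS.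
  have cardCP : r < #|~: P| by move: (cardsC P); rewrite card_ord cardP; lia.
  have PH : (P \in H) || (~: P \in H).
    have : P \in cl r H by rewrite clH inE PS !orbT.
    move/(subsetP (cl_sub_packing_hyp_restr packS HF)).
    rewrite inE cardP ltnn leqNgt cardCP !inE setCK /=.
    by case/orP=> /andP[_]; rewrite // orbC.
  rewrite in_setU; case/orP: PH => PH; rewrite ?PH //.
  by apply/orP; right; apply/imsetP; exists (~: P); rewrite ?setCK.
apply: leq_trans (subset_leq_card SH) _.
by rewrite (leq_trans (leq_card_setU _ _)) // mul2n -addnn leq_add2l leq_imset_card.
Qed.

End Packing.

Section ParityCode.
Variables (G : finZmodType) (r : nat).
Notation V := ('I_r.+1 * G)%type.
Implicit Types f g : {ffun 'I_r.+1 -> G}.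

Definition graph f : {set 'I_#|{: V}|} := [set enum_rank ((i, f i) : V) | i : 'I_r.+1].

Lemma card_graph f : #|graph f| = r.+1.
Proof. by rewrite card_imset ?card_ord // => i j /enum_rank_inj []. Qed.

Lemma card_graphI f g : #|graph f :&: graph g| = #|[set i | f i == g i]|.
Proof.
have -> : graph f :&: graph g = [set enum_rank ((i, f i) : V) | i in [set i | f i == g i]].
  apply/setP=> v; apply/setIP/imsetP => [[/imsetP[i _ ->] /imsetP[j _]]|[i + ->]].
    by move/enum_rank_inj=> [<- efg]; exists i; rewrite // inE efg.
  by rewrite inE => /eqP efg; split; apply/imsetP; exists i; rewrite ?efg.
by rewrite card_imset // => i j /enum_rank_inj [].
Qed.

Definition parity_code := [set f : {ffun 'I_r.+1 -> G} | (\sum_i f i == 0)%R].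

Lemma parity_eq f g :
  r <= #|[set i | f i == g i]| -> (\sum_i f i = \sum_i g i)%R -> f = g.
Proof.
move=> cardE sumfg; apply/ffunP=> j; apply/eqP/negPn/negP=> neq_fgj.
pose D := ~: [set i | f i == g i].
have /card_le1_eqP eqD : #|D| <= 1.
  by move: (cardsC [set i | f i == g i]); rewrite /D card_ord; lia.
have eq_fg i : i != j -> f i = g i.
  move=> neq_ij; apply/eqP/negPn/negP=> neq_fgi.
  by move/negP: neq_ij; apply; apply/eqP/eqD; rewrite !inE.
move: sumfg; rewrite (bigD1 j) //= [in RHS](bigD1 j) //= (eq_bigr _ eq_fg).
by move/addIr/eqP; rewrite (negbTE neq_fgj).
Qed.

Definition parity_ext (x : {ffun 'I_r -> G}) : {ffun 'I_r.+1 -> G} :=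
  [ffun i => if unlift ord0 i is Some j then x j else - \sum_j x j]%R.

Lemma parity_ext_lift x j : parity_ext x (lift ord0 j) = x j.
Proof. by rewrite ffunE liftK. Qed.

Lemma parity_ext_code x : parity_ext x \in parity_code.
Proof.
rewrite inE big_ord_recl (eq_bigr _ (fun j _ => parity_ext_lift x j)).
by rewrite ffunE unlift_none addNr.
Qed.

Lemma parity_ext_inj : injective parity_ext.
Proof. by move=> x y exy; apply/ffunP=> j; rewrite -!parity_ext_lift exy. Qed.

Lemma card_parity_code : #|parity_code| = #|G| ^ r.
Proof.
have -> : parity_code = [set parity_ext x | x : {ffun 'I_r -> G}].
  apply/setP=> f; apply/idP/imsetP=> [fC|[x _ ->]]; last exact: parity_ext_code.
  set x := [ffun j => f (lift ord0 j)]; exists x => //; apply: parity_eq; last first.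
    by move: fC (parity_ext_code x); rewrite !inE => /eqP-> /eqP->.
  rewrite -{1}(card_ord r) -(card_imset _ (@lift_inj _ ord0)).
  by apply/subset_leq_card/subsetP=> _ /imsetP[j _ ->]; rewrite inE parity_ext_lift ffunE.
by rewrite card_imset; [rewrite card_ffun card_ord | exact: parity_ext_inj].
Qed.

Lemma graph_parity_eq f g : f \in parity_code -> g \in parity_code ->
  r <= #|graph f :&: graph g| -> f = g.
Proof.
rewrite card_graphI !inE => /eqP sumf /eqP sumg cardE.
by apply: parity_eq; rewrite ?sumf ?sumg.
Qed.

Definition parity_packing : {set {set 'I_#|{: V}|}} := graph @: parity_code.

Lemma parity_packingP : packing r parity_packing.
Proof.
split=> [_ /imsetP[f _ ->]|_ _ /imsetP[f fC ->] /imsetP[g gC ->]].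
  exact: card_graph.
by move/(graph_parity_eq fC gC)->.
Qed.

Lemma card_parity_packing : #|parity_packing| = #|G| ^ r.
Proof.
rewrite card_in_imset ?card_parity_code // => f g fC gC efg.
by apply: graph_parity_eq fC gC _; rewrite efg setIid card_graph.
Qed.

End ParityCode.

Local Open Scope ring_scope.

Theorem theorem3 (r : nat) (hr : (0 < r)%N) :
  exists c : rat, 0 < c /\
    forall N : nat, exists n : nat, (N <= n)%N /\
      exists H : {set {set 'I_n}},
        r_cross_free r H /\ r_closed r H /\
        forall H' : {set {set 'I_n}}, H' \subset H -> cl r H' = H ->
          c * (n%:R ^+ r) <= (#|H'|)%:R.
Proof.
exists (2 * r.+1 ^ r)%N%:R^-1; split; first by rewrite invr_gt0 ltr0n muln_gt0 expn_gt0.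
move=> N; have packS := parity_packingP 'I_N.+2 r.
have cardV : #|{: 'I_r.+1 * 'I_N.+2}| = (r.+1 * N.+2)%N by rewrite card_prod !card_ord.
exists #|{: 'I_r.+1 * 'I_N.+2}|; split; first by rewrite cardV; nia.
exists (packing_hyp r (parity_packing 'I_N.+2 r)).
split; first exact: packing_hyp_cross_free.
split; first exact: packing_hyp_closed.
move=> H' sub clH.
have le2rn : (2 * r.+1 <= #|{: 'I_r.+1 * 'I_N.+2}|)%N by rewrite cardV; nia.
have := card_packing_le_generators packS le2rn sub clH.
rewrite card_parity_packing card_ord [X in X%:R ^+ r]cardV => card_H'.
rewrite ler_pdivrMl ?ltr0n ?muln_gt0 ?expn_gt0 // -natrX -natrM ler_nat.
by rewrite expnMn (mulnC 2) -mulnA leq_mul2l card_H' orbT.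
Qed.
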